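(* Let $\mathcal K'$ be a tame shrinking of a tame topological Kuranishi atlas $\mathcal K$, with domains $U'_I\subset U_I$. Then the map $\iota:|\mathcal K'|\to|\mathcal K|$ induced by the inclusions $U'_I\hookrightarrow U_I$ (i.e. $\pi_{\mathcal K'}(I,x)\mapsto\pi_{\mathcal K}(I,x)$) is well defined and injective.
   Context: Notation: for subsets $V'\subset V$ of a topological space, $V'\sqsubset V$ means the closure of $V'$ in $V$ is compact. $X$ is a compact metrizable space. Charts: a topological Kuranishi chart for $X$ with open footprint $F\subset X$ is a tuple $\mathbf K=(U,\mathbb E,\mathfrak s,\psi)$ where $U$ is a separable, locally compact, metrizable space; $\mathbb E$ is a separable, locally compact, metrizable space with continuous maps $\mathrm{pr}:\mathbb E\to U$ and $0:U\to\mathbb E$ with $\mathrm{pr}\circ0=\mathrm{id}_U$; $\mathfrak s:U\to\mathbb E$ is continuous with $\mathrm{pr}\circ\mathfrak s=\mathrm{id}_U$; and $\psi$ is a homeomorphism from $\mathfrak s^{-1}(0):=\{x\in U:\mathfrak s(x)=0(x)\}$ onto $F$. For open $U'\subset U$ the restriction is $\mathbf K|_{U'}:=(U',\mathrm{pr}^{-1}(U'),\mathfrak s|_{U'},\psi|_{U'\cap\mathfrak s^{-1}(0)})$. Coordinate changes: for charts $\mathbf K_I,\mathbf K_J$ with $F_I\cap F_J\neq\emptyset$, a coordinate change $\widehat\Phi_{IJ}:\mathbf K_I\to\mathbf K_J$ consists of an open set $U_{IJ}\subset U_I$ with $U_{IJ}\cap\mathfrak s_I^{-1}(0_I)=\psi_I^{-1}(F_I\cap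 F_J)$ and a topological embedding $\widehat\Phi_{IJ}:\mathrm{pr}_I^{-1}(U_{IJ})\to\mathbb E_J$ such that there is a topological embedding $\phi_{IJ}:U_{IJ}\to U_J$ with $\mathrm{pr}_J\circ\widehat\Phi_{IJ}=\phi_{IJ}\circ\mathrm{pr}_I$, $0_J\circ\phi_{IJ}=\widehat\Phi_{IJ}\circ0_I$ and $\mathfrak s_J\circ\phi_{IJ}=\widehat\Phi_{IJ}\circ\mathfrak s_I$ on $U_{IJ}$, and $\phi_{IJ}=\psi_J^{-1}\circ\psi_I$ on $U_{IJ}\cap\mathfrak s_I^{-1}(0_I)$. Atlases: a covering family of basic charts is a finite family $(\mathbf K_i)_{i=1,\dots,N}$ of charts whose footprints cover $X$; $\mathcal I_{\mathcal K}$ is the set of nonempty $I\subset\{1,\dots,N\}$ with $F_I:=\bigcap_{i\in I}F_i\neq\emptyset$. Transition data consist of a chart $\mathbf K_J$ with footprint $F_J$ for each $J\in\mathcal I_{\mathcal K}$ with $|J|\ge2$ (and $\mathbf K_{\{i\}}:=\mathbf K_i$), and a coordinate change $\widehat\Phi_{IJ}:\mathbf K_I\to\mathbf K_J$ for all $I\subsetneq J$ in $\mathcal I_{\mathcal K}$. We set $U_{II}:=U_I$, $\phi_{II}:=\mathrm{id}_{U_I}$. For $I\subsetneq J\subsetneq K$ let $U_{IJK}:=U_{IJ}\cap\phi_{IJ}^{-1}(U_{JK})$. The triple satisfies the weak cocycle condition if $\widehat\Phi_{JK}\circ\widehat\Phi_{IJ}=\widehat\Phi_{IK}$ on $\mathrm{pr}_I^{-1}(U_{IJK}\cap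 U_{IK})$; the cocycle condition if in addition $U_{IJK}\subset U_{IK}$; the strong cocycle condition if in addition $U_{IJK}=U_{IK}$. A weak topological Kuranishi atlas $\mathcal K$ is a covering family with transition data satisfying the weak cocycle condition for all such triples; a topological Kuranishi atlas is one satisfying the cocycle condition for all triples. Filtrations: a weak topological Kuranishi atlas is filtered if it is equipped with closed subsets $\mathbb E_{IJ}\subset\mathbb E_J$ for all $J\in\mathcal I_{\mathcal K}$ and $I\subset J$ (including $I=\emptyset$) such that (i) $\mathbb E_{JJ}=\mathbb E_J$ and $\mathbb E_{\emptyset J}=\mathrm{im}\,0_J$; (ii) $\widehat\Phi_{JK}(\mathrm{pr}_J^{-1}(U_{JK})\cap\mathbb E_{IJ})=\mathbb E_{IK}\cap\mathrm{pr}_K^{-1}(\mathrm{im}\,\phi_{JK})$ for $I\subset J\subsetneq K$; (iii) $\mathbb E_{IJ}\cap\mathbb E_{HJ}=\mathbb E_{(I\cap H)J}$ for $I,H\subset J$; (iv) $\mathrm{im}\,\phi_{IJ}$ is an open subset of $\mathfrak s_J^{-1}(\mathbb E_{IJ})$ for $I\subsetneq J$. Tameness: a filtered weak topological Kuranishi atlas is tame if $U_{IJ}\cap U_{IK}=U_{I(J\cup K)}$ for all $I,J,K\in\mathcal I_{\mathcal K}$ with $I\subset J,K$ (where $U_{IL}:=\emptyset$ if $L\notin\mathcal I_{\mathcal K}$), and $\phi_{IJ}(U_{IK})=U_{JK}\cap\mathfrak s_J^{-1}(\mathbb E_{IJ})$ for all $I\subset J\subset K$ in $\mathcal I_{\mathcal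 K}$ (equalities of indices allowed). Virtual neighbourhood: for a topological Kuranishi atlas, $|\mathcal K|$ is the quotient of $\bigsqcup_{I\in\mathcal I_{\mathcal K}}U_I=\{(I,x):x\in U_I\}$ by the equivalence relation generated by $(I,x)\sim(J,\phi_{IJ}(x))$ for $I\subset J$, $x\in U_{IJ}$, with the quotient topology and projection $\pi_{\mathcal K}$. Shrinkings: a shrinking of a finite open cover $(F_i)_{i=1}^N$ of $X$ is a cover $(F'_i)_{i=1}^N$ of $X$ by open sets $F'_i\sqsubset F_i$ such that $F_I\neq\emptyset\Rightarrow F'_I:=\bigcap_{i\in I}F'_i\neq\emptyset$ for all $I$. A shrinking of a weak topological Kuranishi atlas $\mathcal K$ is a weak topological Kuranishi atlas $\mathcal K'$ with the same index set such that its footprint cover $(F'_i)$ is a shrinking of $(F_i)$, each chart is a restriction $\mathbf K'_I=\mathbf K_I|_{U'_I}$ to a precompact open $U'_I\sqsubset U_I$ with footprint $F'_I$, and each coordinate change $\widehat\Phi'_{IJ}$ is the restriction of $\widehat\Phi_{IJ}$ to the domain $U'_{IJ}:=U'_I\cap\phi_{IJ}^{-1}(U'_J)$. A tame shrinking is a shrinking which, with the filtration $\mathbb E'_{IJ}:=\mathbb E_{IJ}\cap\mathrm{pr}_J^{-1}(U'_J)$, is a tame topological Kuranishi atlas. *)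

From Stdlib Require Import Reals Relations List.
From mathcomp Require Import all_boot.
Set Implicit Arguments.
Unset Strict Implicit.
Unset Printing Implicit Defensive.

Record TopSpace := {
  tcar :> Type;
  topen : (tcar -> Prop) -> Prop;
  topen_full : topen (fun _ => True);
  topen_inter : forall A B, topen A -> topen B -> topen (fun x => A x /\ B x);
  topen_union : forall (i : Type) (A : i -> tcar -> Prop),
      (forall k, topen (A k)) -> topen (fun x => exists k, A k x)
}.

Definition incl_p {T : Type} (A B : T -> Prop) := forall x, A x -> B x.
Definition img {A B : Type} (f : A -> B) (P : A -> Prop) : B -> Prop :=
  fun y => exists x, P x /\ f x = y.

Definition rel_open (T : TopSpace) (A B : T -> Prop) :=
  incl_p B A /\ exists O, @topen T O /\ forall x, B x <-> (A x /\ O x).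
Definition rel_closed (T : TopSpace) (A B : T -> Prop) :=
  incl_p B A /\ exists C, @topen T (fun x => ~ C x) /\ forall x, B x <-> (A x /\ C x).

Definition cont_on (T T' : TopSpace) (A : T -> Prop) (f : T -> T') :=
  forall O, @topen T' O -> rel_open A (fun x => A x /\ O (f x)).

Definition homeo_onto (T T' : TopSpace) (A : T -> Prop) (B : T' -> Prop) (f : T -> T') :=
  (forall x, A x -> B (f x)) /\
  (forall y, B y -> exists x, A x /\ f x = y) /\
  (forall x y, A x -> A y -> f x = f y -> x = y) /\
  cont_on A f /\
  (forall V, rel_open A V -> rel_open B (img f V)).

Definition embedding (T T' : TopSpace) (A : T -> Prop) (f : T -> T') :=
  homeo_onto A (img f A) f.

Definition compact_set (T : TopSpace) (A : T -> Prop) :=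
  forall (i : Type) (O : i -> T -> Prop), (forall k, @topen T (O k)) ->
    (forall x, A x -> exists k, O k x) ->
    exists l : list i, forall x, A x -> exists k, List.In k l /\ O k x.

Definition cl_in (T : TopSpace) (A B : T -> Prop) : T -> Prop :=
  fun x => A x /\ forall O, @topen T O -> O x -> exists y, B y /\ O y.

Definition precompact_in (T : TopSpace) (B A : T -> Prop) :=
  incl_p B A /\ compact_set (cl_in A B).

Definition metrizable_set (T : TopSpace) (A : T -> Prop) :=
  exists d : T -> T -> R,
    (forall x y, A x -> A y -> Rle R0 (d x y)) /\
    (forall x y, A x -> A y -> (d x y = R0 <-> x = y)) /\
    (forall x y, A x -> A y -> d x y = d y x) /\
    (forall x y z, A x -> A y -> A z -> Rle (d x z) (Rplus (d x y) (d y z))) /\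
    (forall B, incl_p B A ->
       (rel_open A B <-> forall x, B x -> exists eps, Rlt R0 eps /\
          forall y, A y -> Rlt (d x y) eps -> B y)).

Definition separable_set (T : TopSpace) (A : T -> Prop) :=
  exists D : T -> Prop, incl_p D A /\
    (exists g : nat -> T, forall x, D x -> exists n, g n = x) /\
    (forall O, @topen T O -> (exists x, A x /\ O x) -> exists x, D x /\ O x).

Definition loc_compact_set (T : TopSpace) (A : T -> Prop) :=
  forall x, A x -> exists Nb : T -> Prop, incl_p Nb A /\ compact_set Nb /\
    exists O, @topen T O /\ O x /\ forall y, A y -> O y -> Nb y.

(* A topological Kuranishi chart whose domain is the (sub)space D of the
   ambient space U; the bundle is E_D = pr^{-1}(D).  For a chart in the
   paper's sense D is everything; restrictions K|_{U'} have D = U'. *)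
Definition is_chart (X U E : TopSpace) (D : U -> Prop) (pr : E -> U)
    (zr s : U -> E) (psi : U -> X) (Fp : X -> Prop) :=
  @topen X Fp /\
  separable_set D /\ loc_compact_set D /\ metrizable_set D /\
  separable_set (fun e => D (pr e)) /\ loc_compact_set (fun e => D (pr e)) /\
  metrizable_set (fun e => D (pr e)) /\
  cont_on (fun e => D (pr e)) pr /\
  cont_on D zr /\ (forall x, D x -> pr (zr x) = x) /\
  cont_on D s /\ (forall x, D x -> pr (s x) = x) /\
  homeo_onto (fun x => D x /\ s x = zr x) Fp psi.

Definition coord_change (X UI UJ EI EJ : TopSpace) (DI : UI -> Prop) (DJ : UJ -> Prop)
    (prI : EI -> UI) (zrI sI : UI -> EI) (psiI : UI -> X)
    (prJ : EJ -> UJ) (zrJ sJ : UJ -> EJ) (psiJ : UJ -> X)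
    (FI FJ : X -> Prop) (UIJ : UI -> Prop) (Phi : EI -> EJ) (phi : UI -> UJ) :=
  rel_open DI UIJ /\
  (forall x, (UIJ x /\ sI x = zrI x) <->
             (DI x /\ sI x = zrI x /\ FI (psiI x) /\ FJ (psiI x))) /\
  (forall e, UIJ (prI e) -> DJ (prJ (Phi e))) /\
  embedding (fun e => UIJ (prI e)) Phi /\
  (forall x, UIJ x -> DJ (phi x)) /\
  embedding UIJ phi /\
  (forall e, UIJ (prI e) -> prJ (Phi e) = phi (prI e)) /\
  (forall x, UIJ x -> zrJ (phi x) = Phi (zrI x)) /\
  (forall x, UIJ x -> sJ (phi x) = Phi (sI x)) /\
  (forall x, UIJ x -> sI x = zrI x -> sJ (phi x) = zrJ (phi x) /\ psiJ (phi x) = psiI x).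

(* Data of a (weak) atlas indexed by subsets I of {1..N} (here 'I_N);
   basic chart K_i is the chart with index [set i].
   aUIJ I J = U_IJ, aPhi I J = Phi_IJ, aphi I J = phi_IJ, aEE I J = E_IJ ⊂ E_J. *)
Record AtlasData (N : nat) (X : TopSpace) := {
  aU : {set 'I_N} -> TopSpace;
  aE : {set 'I_N} -> TopSpace;
  apr : forall I, aE I -> aU I;
  azr : forall I, aU I -> aE I;
  asec : forall I, aU I -> aE I;
  apsi : forall I, aU I -> X;
  aUIJ : forall I J : {set 'I_N}, aU I -> Prop;
  aPhi : forall I J : {set 'I_N}, aE I -> aE J;
  aphi : forall I J : {set 'I_N}, aU I -> aU J;
  aEE : forall I J : {set 'I_N}, aE J -> Prop
}.
Arguments aU {N X} _ _.
Arguments aE {N X} _ _.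
Arguments apr {N X} _ _ _.
Arguments azr {N X} _ _ _.
Arguments asec {N X} _ _ _.
Arguments apsi {N X} _ _ _.
Arguments aUIJ {N X} _ _ _ _.
Arguments aPhi {N X} _ _ _ _.
Arguments aphi {N X} _ _ _ _.
Arguments aEE {N X} _ _ _ _.

Section AtlasDefs.
Local Unset Implicit Arguments.
Variables (N : nat) (X : TopSpace).

Definition foot (F : 'I_N -> X -> Prop) (I : {set 'I_N}) : X -> Prop :=
  fun x => forall i, i \in I -> F i x.

Definition inIK (F : 'I_N -> X -> Prop) (I : {set 'I_N}) :=
  I != set0 /\ exists x, foot F I x.

Variables (K : AtlasData N X) (D : forall I : {set 'I_N}, aU K I -> Prop) (F : 'I_N -> X -> Prop).

Definition weak_atlas :=
  (forall i, @topen X (F i)) /\ (forall x, exists i, F i x) /\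
  (forall I : {set 'I_N}, inIK F I ->
     is_chart (D I) (apr K I) (azr K I) (asec K I) (apsi K I) (foot F I)) /\
  (* conventions U_II = U_I, phi_II = id *)
  (forall (I : {set 'I_N}) x, aUIJ K I I x <-> D I x) /\ (forall (I : {set 'I_N}) x, aphi K I I x = x) /\
  (forall I J : {set 'I_N}, inIK F I -> inIK F J -> I \proper J ->
     coord_change (D I) (D J) (apr K I) (azr K I) (asec K I) (apsi K I)
       (apr K J) (azr K J) (asec K J) (apsi K J)
       (foot F I) (foot F J) (aUIJ K I J) (aPhi K I J) (aphi K I J)) /\
  (forall I J L : {set 'I_N}, inIK F I -> inIK F J -> inIK F L -> I \proper J -> J \proper L ->
     forall e, aUIJ K I J (apr K I e) -> aUIJ K J L (aphi K I J (apr K I e)) ->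
       aUIJ K I L (apr K I e) -> aPhi K J L (aPhi K I J e) = aPhi K I L e).

Definition topological_atlas :=
  weak_atlas /\
  (forall I J L : {set 'I_N}, inIK F I -> inIK F J -> inIK F L -> I \proper J -> J \proper L ->
     forall x, aUIJ K I J x -> aUIJ K J L (aphi K I J x) -> aUIJ K I L x).

Definition filtered :=
  (forall J : {set 'I_N}, inIK F J -> forall I : {set 'I_N}, I \subset J ->
     rel_closed (fun e => D J (apr K J e)) (aEE K I J)) /\
  (forall J : {set 'I_N}, inIK F J -> forall e, aEE K J J e <-> D J (apr K J e)) /\
  (forall J : {set 'I_N}, inIK F J -> forall e, aEE K set0 J e <-> exists x, D J x /\ azr K J x = e) /\
  (forall I J L : {set 'I_N}, inIK F J -> inIK F L -> I \subset J -> J \proper L ->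
     forall f, img (aPhi K J L) (fun e => aUIJ K J L (apr K J e) /\ aEE K I J e) f <->
       (aEE K I L f /\ exists x, aUIJ K J L x /\ apr K L f = aphi K J L x)) /\
  (forall J : {set 'I_N}, inIK F J -> forall I H : {set 'I_N}, I \subset J -> H \subset J ->
     forall e, (aEE K I J e /\ aEE K H J e) <-> aEE K (I :&: H) J e) /\
  (forall I J : {set 'I_N}, inIK F I -> inIK F J -> I \proper J ->
     rel_open (fun y => D J y /\ aEE K I J (asec K J y)) (img (aphi K I J) (aUIJ K I J))).

(* U_IL with the convention U_IL := ∅ for L ∉ I_K *)
Definition UUe (I L : {set 'I_N}) : aU K I -> Prop :=
  fun x => inIK F L /\ aUIJ K I L x.

Definition tame :=
  (forall I J L : {set 'I_N}, inIK F I -> inIK F J -> inIK F L -> I \subset J -> I \subset L ->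
     forall x, (aUIJ K I J x /\ aUIJ K I L x) <-> UUe I (J :|: L) x) /\
  (forall I J L : {set 'I_N}, inIK F I -> inIK F J -> inIK F L -> I \subset J -> J \subset L ->
     forall y, img (aphi K I J) (aUIJ K I L) y <-> (aUIJ K J L y /\ aEE K I J (asec K J y))).

(* the generating relation of the virtual neighbourhood |K| *)
Definition vstep : relation {I : {set 'I_N} & aU K I} :=
  fun p q => exists I J (x : aU K I), inIK F I /\ inIK F J /\ I \subset J /\
    aUIJ K I J x /\ p = existT _ I x /\ q = existT _ J (aphi K I J x).

Definition vrel := clos_refl_sym_trans _ vstep.

End AtlasDefs.
Arguments foot {N X} F I _.
Arguments inIK {N X} F I.
Arguments weak_atlas {N X} K D F.
Arguments topological_atlas {N X} K D F.
Arguments filtered {N X} K D F.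
Arguments UUe {N X} K F I L _.
Arguments tame {N X} K F.
Arguments vstep {N X} K F _ _.
Arguments vrel {N X} K F _ _.

Local Unset Implicit Arguments.
Definition restrict (N : nat) (X : TopSpace) (K : AtlasData N X)
    (D' : forall I : {set 'I_N}, aU K I -> Prop) : AtlasData N X :=
  {| aU := aU K; aE := aE K; apr := apr K; azr := azr K; asec := asec K;
     apsi := apsi K;
     aUIJ := fun I J x => D' I x /\ aUIJ K I J x /\ D' J (aphi K I J x);
     aPhi := aPhi K; aphi := aphi K;
     aEE := fun I J e => aEE K I J e /\ D' J (apr K J e) |}.
Arguments restrict {N X} K D'.
Set Implicit Arguments.

Definition fullD (N : nat) (X : TopSpace) (K : AtlasData N X) : forall I : {set 'I_N}, aU K I -> Prop :=
  fun _ _ => True.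
Arguments fullD {N X} K _ _.

Definition tame_atlas (N : nat) (X : TopSpace) (K : AtlasData N X) (F : 'I_N -> X -> Prop) :=
  topological_atlas K (fullD K) F /\ filtered K (fullD K) F /\ tame K F.

(* K' = (K restricted to U'_I = D' I, footprints F'_i) is a tame shrinking of K *)
Definition tame_shrinking (N : nat) (X : TopSpace) (K : AtlasData N X)
    (F : 'I_N -> X -> Prop) (D' : forall I : {set 'I_N}, aU K I -> Prop) (F' : 'I_N -> X -> Prop) :=
  (forall i, @topen X (F' i)) /\ (forall i, precompact_in (F' i) (F i)) /\
  (forall x, exists i, F' i x) /\
  (forall I : {set 'I_N}, (exists x, foot F I x) -> exists x, foot F' I x) /\
  (forall I : {set 'I_N}, inIK F I -> rel_open (fun _ => True) (D' I) /\ precompact_in (D' I) (fun _ => True)) /\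
  topological_atlas (restrict K D') D' F' /\
  filtered (restrict K D') D' F' /\
  tame (restrict K D') F'.
Arguments tame_atlas {N X} K F.
Arguments tame_shrinking {N X} K F D' F'.

From Stdlib Require Import Reals Relations List.
From mathcomp Require Import all_boot.
Set Implicit Arguments.

(* In a tame atlas, (I,x) ~ (J,y) in |K| iff x and y have a common image
   phi_IM x = phi_JM y in some chart M: tameness makes this relation
   transitive, since common lifts over M1 and M2 push forward to M1 :|: M2.
   Such a common image lies in E_{(I :&: J) M}.  If I :&: J is empty it lies
   on the zero section, so x and y are zeros with the same footprint image,
   and K' already identifies them through the chart I :|: J.  Otherwise
   tameness yields w in U_{I :&: J} mapping to x and to y, and tameness of the
   shrinking forces w into U'_{I :&: J}, so both steps through w happen in
   K'.  The converse is immediate, K' being a restriction of K. *)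

Section Chart.
Variables (X U E : TopSpace) (D : U -> Prop) (pr : E -> U) (zr s : U -> E)
  (psi : U -> X) (Fp : X -> Prop).
Hypothesis C : is_chart D pr zr s psi Fp.

Lemma chart_pr_zr {x} : D x -> pr (zr x) = x.
Proof. by case: C => [_ [_ [_ [_ [_ [_ [_ [_ [_ [przr _]]]]]]]]]]; apply: przr. Qed.

Lemma chart_pr_sec {x} : D x -> pr (s x) = x.
Proof. by case: C => [_ [_ [_ [_ [_ [_ [_ [_ [_ [_ [_ [prs _]]]]]]]]]]]]; apply: prs. Qed.

Lemma chart_zero_foot {x} : D x -> s x = zr x -> Fp (psi x).
Proof.
case: C => [_ [_ [_ [_ [_ [_ [_ [_ [_ [_ [_ [_ [Hpsi _]]]]]]]]]]]]] Dx Zx.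
exact: Hpsi x (conj Dx Zx).
Qed.

Lemma chart_psi_inj {x y} : D x -> s x = zr x -> D y -> s y = zr y ->
  psi x = psi y -> x = y.
Proof.
case: C => [_ [_ [_ [_ [_ [_ [_ [_ [_ [_ [_ [_ [_ [_ [inj _]]]]]]]]]]]]]]] Dx Zx Dy Zy.
exact: inj.
Qed.

End Chart.

Section CoordChange.
Variables (X UI UJ EI EJ : TopSpace) (DI : UI -> Prop) (DJ : UJ -> Prop)
  (prI : EI -> UI) (zrI sI : UI -> EI) (psiI : UI -> X)
  (prJ : EJ -> UJ) (zrJ sJ : UJ -> EJ) (psiJ : UJ -> X)
  (FI FJ : X -> Prop) (UIJ : UI -> Prop) (Phi : EI -> EJ) (phi : UI -> UJ).
Hypothesis CC : coord_change DI DJ prI zrI sI psiI prJ zrJ sJ psiJ FI FJ UIJ Phi phi.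

Lemma cc_dom {x} : UIJ x -> DI x.
Proof. by case: CC => [[sub _] _]; apply: sub. Qed.

Lemma cc_zero_dom {x} : DI x -> sI x = zrI x -> FI (psiI x) -> FJ (psiI x) -> UIJ x.
Proof.
case: CC => [_ [Hzero _]] Dx Zx FIx FJx.
by case/Hzero: (conj Dx (conj Zx (conj FIx FJx))).
Qed.

Lemma cc_Phi_inj {e f} : UIJ (prI e) -> UIJ (prI f) -> Phi e = Phi f -> e = f.
Proof. by case: CC => [_ [_ [_ [[_ [_ [inj _]]] _]]]]; apply: inj. Qed.

Lemma cc_phi_dom {x} : UIJ x -> DJ (phi x).
Proof. by case: CC => [_ [_ [_ [_ [Hdom _]]]]]; apply: Hdom. Qed.

Lemma cc_phi_inj {x y} : UIJ x -> UIJ y -> phi x = phi y -> x = y.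
Proof. by case: CC => [_ [_ [_ [_ [_ [[_ [_ [inj _]]] _]]]]]]; apply: inj. Qed.

Lemma cc_pr {e} : UIJ (prI e) -> prJ (Phi e) = phi (prI e).
Proof. by case: CC => [_ [_ [_ [_ [_ [_ [Hpr _]]]]]]]; apply: Hpr. Qed.

Lemma cc_zr {x} : UIJ x -> zrJ (phi x) = Phi (zrI x).
Proof. by case: CC => [_ [_ [_ [_ [_ [_ [_ [Hzr _]]]]]]]]; apply: Hzr. Qed.

Lemma cc_sec {x} : UIJ x -> sJ (phi x) = Phi (sI x).
Proof. by case: CC => [_ [_ [_ [_ [_ [_ [_ [_ [Hs _]]]]]]]]]; apply: Hs. Qed.

Lemma cc_psi {x} : UIJ x -> sI x = zrI x -> psiJ (phi x) = psiI x.
Proof. by case: CC => [_ [_ [_ [_ [_ [_ [_ [_ [_ Hpsi]]]]]]]]] Ux Zx; case: (Hpsi x Ux Zx). Qed.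

End CoordChange.

Lemma vrel_step N X {K : AtlasData N X} {F : 'I_N -> X -> Prop} {I J} {x : aU K I} :
  inIK F I -> inIK F J -> I \subset J -> aUIJ K I J x ->
  vrel K F (existT _ I x) (existT _ J (aphi K I J x)).
Proof.
by move=> iI iJ sIJ Ux; apply: rst_step; exists I, J, x; do 4 (split; first done).
Qed.

Section WeakAtlas.
Variables (N : nat) (X : TopSpace) (K : AtlasData N X)
  (D : forall I, aU K I -> Prop) (F : 'I_N -> X -> Prop).
Hypothesis W : weak_atlas K D F.

Lemma atlas_chart I : inIK F I ->
  is_chart (D I) (apr K I) (azr K I) (asec K I) (apsi K I) (foot F I).
Proof. by case: W => [_ [_ [C _]]]; apply: C. Qed.

Lemma atlas_UII I x : aUIJ K I I x <-> D I x.
Proof. by case: W => [_ [_ [_ [UII _]]]]. Qed.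

Lemma atlas_phiII I x : aphi K I I x = x.
Proof. by case: W => [_ [_ [_ [_ [phiII _]]]]]. Qed.

Lemma atlas_coord_change I J : inIK F I -> inIK F J -> I \proper J ->
  coord_change (D I) (D J) (apr K I) (azr K I) (asec K I) (apsi K I)
    (apr K J) (azr K J) (asec K J) (apsi K J)
    (foot F I) (foot F J) (aUIJ K I J) (aPhi K I J) (aphi K I J).
Proof. by case: W => [_ [_ [_ [_ [_ [CC _]]]]]]; apply: CC. Qed.

Lemma atlas_weak_cocycle I J L e : inIK F I -> inIK F J -> inIK F L ->
  I \proper J -> J \proper L ->
  aUIJ K I J (apr K I e) -> aUIJ K J L (aphi K I J (apr K I e)) ->
  aUIJ K I L (apr K I e) -> aPhi K J L (aPhi K I J e) = aPhi K I L e.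
Proof. by case: W => [_ [_ [_ [_ [_ [_ wc]]]]]] *; apply: wc. Qed.

Section Inclusion.
Variables (I J : {set 'I_N}).
Hypotheses (iI : inIK F I) (iJ : inIK F J) (sIJ : I \subset J).

Lemma UIJ_dom {x} : aUIJ K I J x -> D I x.
Proof.
case/eqVproper: sIJ => [<-|pIJ]; first by case: (atlas_UII I x).
apply: (cc_dom (atlas_coord_change iI iJ pIJ)).
Qed.

Lemma phi_dom {x} : aUIJ K I J x -> D J (aphi K I J x).
Proof.
case/eqVproper: sIJ => [<-|pIJ]; first by rewrite atlas_phiII; case: (atlas_UII I x).
apply: (cc_phi_dom (atlas_coord_change iI iJ pIJ)).
Qed.

Lemma phi_inj {x y} : aUIJ K I J x -> aUIJ K I J y ->
  aphi K I J x = aphi K I J y -> x = y.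
Proof.
case/eqVproper: sIJ => [<-|pIJ]; first by rewrite !atlas_phiII.
apply: (cc_phi_inj (atlas_coord_change iI iJ pIJ)).
Qed.

Lemma zero_pullback {x} : aUIJ K I J x ->
  asec K J (aphi K I J x) = azr K J (aphi K I J x) ->
  asec K I x = azr K I x /\ apsi K J (aphi K I J x) = apsi K I x.
Proof.
case/eqVproper: sIJ => [<-|pIJ]; first by rewrite atlas_phiII.
have CC := atlas_coord_change iI iJ pIJ => Ux Zx.
have Dx := cc_dom CC Ux.
have C := atlas_chart iI.
have Zx' : asec K I x = azr K I x.
  apply: (cc_Phi_inj CC); rewrite ?(chart_pr_sec C) ?(chart_pr_zr C) //.
  by rewrite -(cc_sec CC) // -(cc_zr CC).
by split; last exact: (cc_psi CC).
Qed.

Lemma zero_pushforward {x} :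
  D I x -> asec K I x = azr K I x -> foot F J (apsi K I x) ->
  aUIJ K I J x /\ asec K J (aphi K I J x) = azr K J (aphi K I J x) /\
  apsi K J (aphi K I J x) = apsi K I x.
Proof.
case/eqVproper: sIJ => [<-|pIJ]; first by rewrite atlas_phiII => /atlas_UII.
have CC := atlas_coord_change iI iJ pIJ => Dx Zx FJx.
have Ux : aUIJ K I J x.
  by apply: (cc_zero_dom CC) => //; apply: (chart_zero_foot (atlas_chart iI)).
by split; [|split; [rewrite (cc_sec CC) // (cc_zr CC) // Zx|apply: (cc_psi CC)]].
Qed.

End Inclusion.

Lemma vrel_of_zeros {I J x y} : inIK F I -> inIK F J ->
  D I x -> asec K I x = azr K I x -> D J y -> asec K J y = azr K J y ->
  apsi K I x = apsi K J y -> vrel K F (existT _ I x) (existT _ J y).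
Proof.
move=> iI iJ Dx Zx Dy Zy Pxy.
set L := I :|: J.
have FL : foot F L (apsi K I x).
  move=> i; rewrite in_setU => /orP[]; first exact: (chart_zero_foot (atlas_chart iI)).
  by rewrite Pxy; apply: (chart_zero_foot (atlas_chart iJ)).
have iL : inIK F L.
  by split; [rewrite setU_eq0 negb_and; case: iI => -> | exists (apsi K I x)].
have [UxL [ZxL PxL]] := zero_pushforward iI iL (subsetUl I J) Dx Zx FL.
rewrite Pxy in FL.
have [UyL [ZyL PyL]] := zero_pushforward iJ iL (subsetUr I J) Dy Zy FL.
have DxL := phi_dom iI iL (subsetUl I J) UxL.
have DyL := phi_dom iJ iL (subsetUr I J) UyL.
have exy : aphi K I L x = aphi K J L y.
  by apply: (chart_psi_inj (atlas_chart iL)); rewrite ?PxL ?PyL.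
have stepx := vrel_step iI iL (subsetUl I J) UxL.
have stepy := vrel_step iJ iL (subsetUr I J) UyL.
rewrite -exy in stepy.
by apply: (rst_trans _ _ _ _ _ stepx); apply: rst_sym.
Qed.

End WeakAtlas.

Section Cocycle.
Variables (N : nat) (X : TopSpace) (K : AtlasData N X)
  (D : forall I, aU K I -> Prop) (F : 'I_N -> X -> Prop).
Hypothesis T : topological_atlas K D F.

Lemma phi_comp {I J L x} : inIK F I -> inIK F J -> inIK F L ->
  I \subset J -> J \subset L -> aUIJ K I J x -> aUIJ K J L (aphi K I J x) ->
  aUIJ K I L x /\ aphi K I L x = aphi K J L (aphi K I J x).
Proof.
have W := proj1 T => iI iJ iL.
case/eqVproper => [<-|pIJ]; first by rewrite (atlas_phiII W).
case/eqVproper => [<-|pJL]; first by rewrite (atlas_phiII W).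
move=> UIJx UJLx.
have UILx : aUIJ K I L x.
  by case: T => _ cocycle; exact: cocycle iI iJ iL pIJ pJL x UIJx UJLx.
split=> //.
have CIJ := atlas_coord_change W iI iJ pIJ.
have CJL := atlas_coord_change W iJ iL pJL.
have CIL := atlas_coord_change W iI iL (proper_trans pIJ pJL).
have przr := chart_pr_zr (atlas_chart W iI) (cc_dom CIJ UIJx).
(* phi is computed on the zero section, where the weak cocycle condition applies *)
rewrite -{1}przr -(cc_pr CIL) ?przr //.
rewrite -(atlas_weak_cocycle W (azr K I x) iI iJ iL pIJ pJL) ?przr //.
by rewrite (cc_pr CJL) (cc_pr CIJ) ?przr.
Qed.

End Cocycle.

Section Filtration.
Variables (N : nat) (X : TopSpace) (K : AtlasData N X)
  (D : forall I, aU K I -> Prop) (F : 'I_N -> X -> Prop).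
Hypotheses (W : weak_atlas K D F) (Fl : filtered K D F).

Lemma filt_EE_top J e : inIK F J -> aEE K J J e <-> D J (apr K J e).
Proof. by case: Fl => [_ [EJJ _]] iJ; exact: EJJ J iJ e. Qed.

Lemma filt_EE_bot J e : inIK F J ->
  aEE K set0 J e <-> exists x, D J x /\ azr K J x = e.
Proof. by case: Fl => [_ [_ [E0 _]]] iJ; exact: E0 J iJ e. Qed.

Lemma filt_EE_Phi (I J L : {set 'I_N}) f :
  inIK F J -> inIK F L -> I \subset J -> J \proper L ->
  img (aPhi K J L) (fun e => aUIJ K J L (apr K J e) /\ aEE K I J e) f <->
  (aEE K I L f /\ exists x, aUIJ K J L x /\ apr K L f = aphi K J L x).
Proof.
by case: Fl => [_ [_ [_ [EPhi _]]]] iJ iL sIJ pJL; exact: EPhi I J L iJ iL sIJ pJL f.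
Qed.

Lemma filt_EE_meet (J I H : {set 'I_N}) e :
  inIK F J -> I \subset J -> H \subset J ->
  (aEE K I J e /\ aEE K H J e) <-> aEE K (I :&: H) J e.
Proof.
by case: Fl => [_ [_ [_ [_ [Emeet _]]]]] iJ sIJ sHJ; exact: Emeet J iJ I H sIJ sHJ e.
Qed.

Lemma sec_phi_EE {I J x} : inIK F I -> inIK F J -> I \subset J ->
  aUIJ K I J x -> aEE K I J (asec K J (aphi K I J x)).
Proof.
move=> iI iJ sIJ Ux.
have Dx := UIJ_dom W iI iJ sIJ Ux.
have prs := chart_pr_sec (atlas_chart W iI) Dx.
have EIIs : aEE K I I (asec K I x) by apply/(filt_EE_top _ iI); rewrite prs.
case/eqVproper: sIJ => [<-|pIJ]; first by rewrite (atlas_phiII W).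
have CC := atlas_coord_change W iI iJ pIJ.
rewrite (cc_sec CC) //.
case: (proj1 (filt_EE_Phi (aPhi K I J (asec K I x)) iI iJ (subxx I) pIJ)) => //.
by exists (asec K I x); rewrite prs.
Qed.

Lemma sec_zero_of_EE_bot {J x} : inIK F J -> D J x ->
  aEE K set0 J (asec K J x) -> asec K J x = azr K J x.
Proof.
move=> iJ Dx /(filt_EE_bot _ iJ) [v [Dv Ev]].
have C := atlas_chart W iJ.
have xv : x = v by rewrite -(chart_pr_sec C Dx) -Ev (chart_pr_zr C Dv).
by rewrite -Ev xv.
Qed.

Lemma common_image_EE {I J M x y} : inIK F I -> inIK F J -> inIK F M ->
  I \subset M -> J \subset M -> aUIJ K I M x -> aUIJ K J M y ->
  aphi K I M x = aphi K J M y -> aEE K (I :&: J) M (asec K M (aphi K I M x)).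
Proof.
move=> iI iJ iM sIM sJM Ux Uy Exy.
apply/(filt_EE_meet _ iM sIM sJM); split; first exact: sec_phi_EE.
by rewrite Exy; apply: sec_phi_EE.
Qed.

End Filtration.

Lemma inIK_meet N (X : TopSpace) (F : 'I_N -> X -> Prop) {I J : {set 'I_N}} :
  inIK F I -> I :&: J != set0 -> inIK F (I :&: J).
Proof.
move=> [_ [p Fp]] nzIJ; split=> //; exists p => i.
by rewrite in_setI => /andP[iI _]; apply: Fp.
Qed.

Section Tame.
Variables (N : nat) (X : TopSpace) (K : AtlasData N X) (F : 'I_N -> X -> Prop).
Hypothesis Tm : tame K F.
Variables (I J L : {set 'I_N}).
Hypotheses (iI : inIK F I) (iJ : inIK F J) (iL : inIK F L).

Lemma tame_UIJ_union {x} : I \subset J -> I \subset L ->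
  aUIJ K I J x -> aUIJ K I L x -> inIK F (J :|: L) /\ aUIJ K I (J :|: L) x.
Proof.
by case: Tm => [union _] sIJ sIL UJx ULx; apply: (proj1 (union I J L iI iJ iL sIJ sIL x)).
Qed.

Lemma tame_UIJ_sub {x} : I \subset J -> J \subset L -> aUIJ K I L x -> aUIJ K I J x.
Proof.
case: Tm => [union _] sIJ sJL ULx.
have sIL := subset_trans sIJ sJL.
have [] // := proj2 (union I J L iI iJ iL sIJ sIL x).
by rewrite /UUe (setUidPr sJL).
Qed.

Lemma tame_phi_UIJ {w} : I \subset J -> J \subset L -> aUIJ K I L w ->
  aUIJ K J L (aphi K I J w).
Proof.
case: Tm => [_ image] sIJ sJL ULw.
by case: (proj1 (image I J L iI iJ iL sIJ sJL (aphi K I J w))); first by exists w.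
Qed.

Lemma tame_image_lift {y} : I \subset J -> J \subset L ->
  aUIJ K J L y -> aEE K I J (asec K J y) ->
  exists2 w, aUIJ K I L w & aphi K I J w = y.
Proof.
case: Tm => [_ image] sIJ sJL ULy Ey.
by case: (proj2 (image I J L iI iJ iL sIJ sJL y) (conj ULy Ey)) => w []; exists w.
Qed.

End Tame.

Definition common_lift N X (K : AtlasData N X) (F : 'I_N -> X -> Prop)
    (p q : {I : {set 'I_N} & aU K I}) : Prop :=
  let (I, x) := p in let (J, y) := q in
  exists M, [/\ inIK F I, inIK F J, inIK F M, I \subset M & J \subset M] /\
    [/\ aUIJ K I M x, aUIJ K J M y & aphi K I M x = aphi K J M y].
Arguments common_lift {N X} K F p q.

Lemma common_lift_sym N X (K : AtlasData N X) F p q :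
  common_lift K F p q -> common_lift K F q p.
Proof. by case: p q => [I x] [J y] [M [[? ? ? ? ?] [? ? ?]]]; exists M. Qed.

Section TameAtlas.
Variables (N : nat) (X : TopSpace) (K : AtlasData N X) (F : 'I_N -> X -> Prop).
Hypothesis A : tame_atlas K F.
Let T : topological_atlas K (fullD K) F := proj1 A.
Let W : weak_atlas K (fullD K) F := proj1 T.
Let Fl : filtered K (fullD K) F := proj1 (proj2 A).
Let Tm : tame K F := proj2 (proj2 A).

Lemma common_lift_trans p q r :
  common_lift K F p q -> common_lift K F q r -> common_lift K F p r.
Proof.
case: p q r => [I x] [J y] [L z].
move=> [M1 [[iI iJ iM1 sI1 sJ1] [Ux1 Uy1 E1]]] [M2 [[_ iL iM2 sJ2 sL2] [Uy2 Uz2 E2]]].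
have [iM UyM] := tame_UIJ_union Tm iJ iM1 iM2 sJ1 sJ2 Uy1 Uy2.
set M := M1 :|: M2 in iM UyM *.
have s1 : M1 \subset M := subsetUl M1 M2.
have s2 : M2 \subset M := subsetUr M1 M2.
have U1 := tame_phi_UIJ Tm iJ iM1 iM sJ1 s1 UyM.
have U2 := tame_phi_UIJ Tm iJ iM2 iM sJ2 s2 UyM.
have [UxM ExM] := phi_comp T iI iM1 iM sI1 s1 Ux1 (ltac:(by rewrite E1)).
have [_ EyM1] := phi_comp T iJ iM1 iM sJ1 s1 Uy1 U1.
have [_ EyM2] := phi_comp T iJ iM2 iM sJ2 s2 Uy2 U2.
have [UzM EzM] := phi_comp T iL iM2 iM sL2 s2 Uz2 (ltac:(by rewrite -E2)).
exists M; split; first by split=> //; [exact: subset_trans sI1 s1|exact: subset_trans sL2 s2].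
by split=> //; rewrite ExM E1 -EyM1 EyM2 E2 EzM.
Qed.

Lemma vrel_common_lift p q : vrel K F p q -> p = q \/ common_lift K F p q.
Proof.
elim=> {p q} [p q [I [J [x [iI [iJ [sIJ [Ux [-> ->]]]]]]]]|p|p q _ [->|/common_lift_sym]|
  p q r _ [->|pq] _ [<-|qr]]; try by [left|right].
- right; exists J; split; first by split=> //.
  by split=> //; [apply/(atlas_UII W)|rewrite (atlas_phiII W)].
- by right; apply: common_lift_trans pq qr.
Qed.

Lemma common_lift_disjoint_zero {I J x y} : I :&: J = set0 ->
  common_lift K F (existT _ I x) (existT _ J y) ->
  [/\ asec K I x = azr K I x, asec K J y = azr K J y & apsi K I x = apsi K J y].
Proof.
move=> IJ0 [M [[iI iJ iM sIM sJM] [Ux Uy Exy]]].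
have EIJ := common_image_EE W Fl iI iJ iM sIM sJM Ux Uy Exy.
rewrite IJ0 in EIJ.
have Zz := sec_zero_of_EE_bot W Fl iM Logic.I EIJ.
have [Zx Px] := zero_pullback W iI iM sIM Ux Zz.
rewrite Exy in Zz.
have [Zy Py] := zero_pullback W iJ iM sJM Uy Zz.
by split=> //; rewrite -Px -Py Exy.
Qed.

Lemma common_lift_meet {I J x y} : I :&: J != set0 ->
  common_lift K F (existT _ I x) (existT _ J y) ->
  exists w, [/\ aUIJ K (I :&: J) I w, aUIJ K (I :&: J) J w,
    aphi K (I :&: J) I w = x & aphi K (I :&: J) J w = y].
Proof.
move=> nzIJ [M [[iI iJ iM sIM sJM] [Ux Uy Exy]]].
have EIJ := common_image_EE W Fl iI iJ iM sIM sJM Ux Uy Exy.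
set H := I :&: J in nzIJ EIJ *.
have iH : inIK F H := inIK_meet iI nzIJ.
have sHI : H \subset I := subsetIl I J.
have sHJ : H \subset J := subsetIr I J.
have sHM := subset_trans sHI sIM.
have UMz : aUIJ K M M (aphi K I M x) by apply/(atlas_UII W).
have [w UHMw Ew] := tame_image_lift Tm iH iM iM sHM (subxx M) UMz EIJ.
have UHIw := tame_UIJ_sub Tm iH iI iM sHI sIM UHMw.
have UHJw := tame_UIJ_sub Tm iH iJ iM sHJ sJM UHMw.
have UIMw := tame_phi_UIJ Tm iH iI iM sHI sIM UHMw.
have UJMw := tame_phi_UIJ Tm iH iJ iM sHJ sJM UHMw.
have [_ CI] := phi_comp T iH iI iM sHI sIM UHIw UIMw.
have [_ CJ] := phi_comp T iH iJ iM sHJ sJM UHJw UJMw.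
exists w; split=> //.
- by apply: (phi_inj W iI iM sIM UIMw Ux); rewrite -CI Ew.
- by apply: (phi_inj W iJ iM sJM UJMw Uy); rewrite -CJ Ew Exy.
Qed.

End TameAtlas.

Section TameShrinking.
Variables (N : nat) (X : TopSpace) (K : AtlasData N X) (F : 'I_N -> X -> Prop)
  (D' : forall I, aU K I -> Prop) (F' : 'I_N -> X -> Prop).
Hypotheses (A : tame_atlas K F) (S : tame_shrinking K F D' F').
Let W : weak_atlas K (fullD K) F := proj1 (proj1 A).
Let Fl : filtered K (fullD K) F := proj1 (proj2 A).
Let W' : weak_atlas (restrict K D') D' F' :=
  proj1 (proj1 (proj2 (proj2 (proj2 (proj2 (proj2 S)))))).
Let Tm' : tame (restrict K D') F' :=
  proj2 (proj2 (proj2 (proj2 (proj2 (proj2 (proj2 S)))))).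

Lemma inIK_shrink I : inIK F I -> inIK F' I.
Proof. by case: S => [_ [_ [_ [nonempty _]]]] [nzI /nonempty]. Qed.

Lemma inIK_unshrink I : inIK F' I -> inIK F I.
Proof.
case: S => [_ [pre _]] [nzI [p Fp]]; split=> //; exists p => i Ii.
exact: (proj1 (pre i)) _ (Fp i Ii).
Qed.

Lemma vrel_unshrink p q : vrel (restrict K D') F' p q -> vrel K F p q.
Proof.
elim=> {p q} [p q [I [J [x [iI [iJ [sIJ [[_ [Ux _]] [-> ->]]]]]]]]|p|p q _|p q r _ pq _].
- exact: vrel_step (inIK_unshrink iI) (inIK_unshrink iJ) sIJ Ux.
- exact: rst_refl.
- exact: rst_sym.
- exact: rst_trans pq.
Qed.

(* Tameness of K' with J = L = I reads phi_HI (U'_HI) = U'_I :&: s_I^-1 (E'_HI). *)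
Lemma shrink_dom_pullback {H I w} : inIK F H -> inIK F I -> H \subset I ->
  aUIJ K H I w -> D' I (aphi K H I w) -> D' H w.
Proof.
move=> iH iI sHI UHIw DIx.
have UIIx : aUIJ (restrict K D') I I (aphi K H I w).
  by split=> //; split; [apply/(atlas_UII W)|rewrite (atlas_phiII W)].
have EHIx : aEE (restrict K D') H I (asec K I (aphi K H I w)).
  split; first exact: (sec_phi_EE W Fl iH iI sHI UHIw).
  by rewrite (chart_pr_sec (atlas_chart W iI)).
have iI' := inIK_shrink iI.
have [w' [Dw' [UHIw' _]] Ew'] :=
  tame_image_lift Tm' (inIK_shrink iH) iI' iI' sHI (subxx I) UIIx EHIx.
by rewrite -(phi_inj W iH iI sHI UHIw' UHIw Ew').
Qed.

Lemma vrel_shrink_common_lift {I J x y} : D' I x -> D' J y ->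
  common_lift K F (existT _ I x) (existT _ J y) ->
  vrel (restrict K D') F' (existT _ I x) (existT _ J y).
Proof.
move=> Dx Dy cl.
have [iI iJ] : inIK F I /\ inIK F J by case: cl => M [[]].
case: (eqVneq (I :&: J) set0) => [IJ0|nzIJ].
  have [Zx Zy Pxy] := common_lift_disjoint_zero A IJ0 cl.
  exact: (vrel_of_zeros W' (inIK_shrink iI) (inIK_shrink iJ) Dx Zx Dy Zy Pxy).
have [w [UHIw UHJw Ex Ey]] := common_lift_meet A nzIJ cl.
have iH := inIK_meet iI nzIJ.
have sHI := subsetIl I J.
have sHJ := subsetIr I J.
subst x y.
have Dw := shrink_dom_pullback iH iI sHI UHIw Dx.
have UHIw' : aUIJ (restrict K D') (I :&: J) I w by [].
have UHJw' : aUIJ (restrict K D') (I :&: J) J w by [].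
have stepx := vrel_step (inIK_shrink iH) (inIK_shrink iI) sHI UHIw'.
have stepy := vrel_step (inIK_shrink iH) (inIK_shrink iJ) sHJ UHJw'.
by apply: (rst_trans _ _ _ _ _ (rst_sym _ _ _ _ stepx)).
Qed.

End TameShrinking.

Theorem mainTheorem12 (N : nat) (X : TopSpace) (K : AtlasData N X)
    (F : 'I_N -> X -> Prop) (D' : forall I, aU K I -> Prop) (F' : 'I_N -> X -> Prop) :
  compact_set (fun _ : X => True) ->
  metrizable_set (fun _ : X => True) ->
  tame_atlas K F ->
  tame_shrinking K F D' F' ->
  forall (I J : {set 'I_N}) (x : aU K I) (y : aU K J),
    inIK F I -> D' I x -> inIK F J -> D' J y ->
    (vrel (restrict K D') F' (existT _ I x) (existT _ J y) <->
     vrel K F (existT _ I x) (existT _ J y)).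
Proof.
move=> _ _ A S I J x y _ Dx _ Dy; split; first exact: vrel_unshrink.
case/(vrel_common_lift A) => [->|cl]; first exact: rst_refl.
exact: (vrel_shrink_common_lift A S Dx Dy cl).
Qed.
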